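(* Let $(q,E)$ be an annotated CQ. (1) If there is any CQ that fits $E$, then there is a $\preceq^{\mathrm{edit\text{-}dist}}$-repair for $(q,E)$. (2) If there is any CQ $q'$ that fits $E$ with $q\subseteq q'$, then there is a $\preceq^{\mathrm{edit\text{-}dist}}$-generalization for $(q,E)$. (3) If there is any CQ $q'$ that fits $E$ with $q'\subseteq q$, then there is a $\preceq^{\mathrm{edit\text{-}dist}}$-specialization for $(q,E)$. Moreover, there are at most finitely many $\preceq^{\mathrm{edit\text{-}dist}}$-repairs, $\preceq^{\mathrm{edit\text{-}dist}}$-generalizations, and $\preceq^{\mathrm{edit\text{-}dist}}$-specializations for $(q,E)$, up to equivalence.
   Context: All CQs are $q(x_1,\dots,x_k)\text{ :- }\alpha_1,\dots,\alpha_n$ (relational atoms, no constants, pairwise distinct answer variables each occurring in an atom). Data examples are $(I,\mathbf a)$, $I$ a finite instance, $\mathbf a$ a $k$-tuple of its values; $[\![q]\!]$ is the set of data examples with $\mathbf a\in q(I)$; $\subseteq$ query containment, equivalence = containment both ways. An annotated CQ is $(q,E)$ with $E=(E^+,E^-)$ labeled examples; $q$ fits $E$ iff $E^+\subseteq[\![q]\!]$ and $E^-\cap[\![q]\!]=\emptyset$. $\mathrm{edit\text{-}dist}(q_1,q_2)=\min_\rho|\mathrm{core}(e_{q_1})\oplus\mathrm{core}(e_{\rho(q_2)})|$ over bijective variable renamings $\rho$ of $q_2(y_1,\dots,y_k)$ with $\rho(y_i)=x_i$, where $e_q$ is the canonical example (atoms of $q$ as facts, answer tuple distinguished), $\mathrm{core}$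 the homomorphism core, $\oplus$ symmetric difference of facts. $q'\preceq_q q''$ iff $\mathrm{edit\text{-}dist}(q,q')\le\mathrm{edit\text{-}dist}(q,q'')$; $\prec_q$ strict part. A $\preceq$-repair for $(q,E)$: a CQ $q'$ fitting $E$ with no CQ $q''$ fitting $E$ and $q''\prec_q q'$. A $\preceq$-generalization (resp. specialization): a CQ $q'$ fitting $E$ with $q\subseteq q'$ (resp. $q'\subseteq q$) such that no CQ $q''$ fitting $E$ with $q\subseteq q''$ (resp. $q''\subseteq q$) has $q''\prec_q q'$. Candidate CQs use only relation symbols occurring in $q$ and $E$. *)

From mathcomp Require Import all_boot.
Set Implicit Arguments. Unset Strict Implicit. Unset Printing Implicit Defensive.

(** Relation symbols, variables and values are natural numbers.
    A schema is given by an arity function [ar : nat -> nat]. *)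

(** An atom / fact: relation symbol together with its argument tuple. *)
Definition atom := (nat * seq nat)%type.
Definition fact := (nat * seq nat)%type.
(** A finite instance: a finite set of facts (duplicates irrelevant). *)
Definition instance := seq fact.

(** A CQ q(x1..xk) :- a1,...,an  is  (answer tuple, list of atoms). *)
Definition CQ := (seq nat * seq atom)%type.
Definition head (q : CQ) : seq nat := q.1.
Definition body (q : CQ) : seq atom := q.2.

Definition wf_CQ (ar : nat -> nat) (q : CQ) : Prop :=
  [/\ uniq (head q),
      (forall x, x \in head q -> exists2 at_, at_ \in body q & x \in at_.2)
    & (forall at_, at_ \in body q -> size at_.2 = ar at_.1)].

Definition wf_instance (ar : nat -> nat) (I : instance) : Prop :=
  forall f, f \in I -> size f.2 = ar f.1.

Definition adom (I : instance) : seq nat := flatten (map snd I).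

Definition example := (instance * seq nat)%type.
Definition data_example (ar : nat -> nat) (ex : example) : Prop :=
  wf_instance ar ex.1 /\ {subset ex.2 <= adom ex.1}.

Definition map_fact (h : nat -> nat) (f : fact) : fact := (f.1, map h f.2).

Definition answer (q : CQ) (I : instance) (a : seq nat) : Prop :=
  exists h : nat -> nat,
    map h (head q) = a /\ forall at_, at_ \in body q -> map_fact h at_ \in I.

Definition in_sem (ar : nat -> nat) (q : CQ) (ex : example) : Prop :=
  data_example ar ex /\ answer q ex.1 ex.2.

Definition contained (ar : nat -> nat) (q1 q2 : CQ) : Prop :=
  forall ex, in_sem ar q1 ex -> in_sem ar q2 ex.
Definition equivalent (ar : nat -> nat) (q1 q2 : CQ) : Prop :=
  contained ar q1 q2 /\ contained ar q2 q1.

Definition annotation := (seq example * seq example)%type.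
Definition pos (E : annotation) := E.1.
Definition neg (E : annotation) := E.2.

Definition fits (ar : nat -> nat) (q : CQ) (E : annotation) : Prop :=
  (forall ex, ex \in pos E -> in_sem ar q ex) /\
  (forall ex, ex \in neg E -> ~ in_sem ar q ex).

(** annotated CQ (q,E): E consists of data examples of the arity of q *)
Definition wf_annotation (ar : nat -> nat) (q : CQ) (E : annotation) : Prop :=
  forall ex, ex \in pos E ++ neg E ->
    data_example ar ex /\ size ex.2 = size (head q).

Definition hom_ex (I : instance) (a : seq nat) (J : instance) (b : seq nat) : Prop :=
  exists h : nat -> nat, map h a = b /\ forall f, f \in I -> map_fact h f \in J.

Definition sub_inst (J I : instance) : Prop := {subset J <= I}.
Definition proper_sub (J I : instance) : Prop :=
  sub_inst J I /\ exists2 f, f \in I & f \notin J.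

Definition is_core (I : instance) (a : seq nat) (J : instance) : Prop :=
  [/\ sub_inst J I, hom_ex I a J a
    & forall J', proper_sub J' J -> ~ hom_ex J a J' a].

Definition symdiff_size (I J : instance) : nat :=
  size [seq f <- undup (I ++ J) | (f \in I) != (f \in J)].

(** The canonical example e_q is (body q, head q).
    The minimum ranges over bijective renamings rho (of the whole variable
    universe) with rho(y_i) = x_i, and over the choice of core
    representatives (the value does not depend on that choice). *)
Definition edit_dist_le (q1 q2 : CQ) (n : nat) : Prop :=
  exists (C1 C2 : instance) (rho : nat -> nat),
    [/\ is_core (body q1) (head q1) C1,
        is_core (body q2) (head q2) C2,
        bijective rho,
        map rho (head q2) = head q1
      & symdiff_size C1 (map (map_fact rho) C2) <= n].

(** q1 <=_q q2  iff  edit-dist(q,q1) <= edit-dist(q,q2) *)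
Definition dist_preceq (q q1 q2 : CQ) : Prop :=
  forall n, edit_dist_le q q2 n -> edit_dist_le q q1 n.
Definition dist_prec (q q1 q2 : CQ) : Prop :=
  dist_preceq q q1 q2 /\ ~ dist_preceq q q2 q1.

Definition rels_of_CQ (q : CQ) : seq nat := map fst (body q).
Definition rels_of_annot (E : annotation) : seq nat :=
  flatten [seq map fst ex.1 | ex <- pos E ++ neg E].

Definition candidate (ar : nat -> nat) (q : CQ) (E : annotation) (q' : CQ) : Prop :=
  [/\ wf_CQ ar q', size (head q') = size (head q)
    & {subset rels_of_CQ q' <= rels_of_CQ q ++ rels_of_annot E}].

Definition is_repair ar q E q' : Prop :=
  [/\ candidate ar q E q', fits ar q' E
    & ~ exists q'', [/\ candidate ar q E q'', fits ar q'' E & dist_prec q q'' q']].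

Definition is_generalization ar q E q' : Prop :=
  [/\ candidate ar q E q', fits ar q' E, contained ar q q'
    & ~ exists q'', [/\ candidate ar q E q'', fits ar q'' E, contained ar q q''
                      & dist_prec q q'' q']].

Definition is_specialization ar q E q' : Prop :=
  [/\ candidate ar q E q', fits ar q' E, contained ar q' q
    & ~ exists q'', [/\ candidate ar q E q'', fits ar q'' E, contained ar q'' q
                      & dist_prec q q'' q']].

Definition finitely_many_upto_equiv ar (P : CQ -> Prop) : Prop :=
  exists L : seq CQ, forall q', P q' -> exists2 r, r \in L & equivalent ar q' r.

From Stdlib Require Import Classical.
From Pilot Require Import Defs.
From mathcomp Require Import all_boot.
Import Defs. (* [head] is the answer tuple of a CQ, not [seq.head]. *)
Set Implicit Arguments. Unset Strict Implicit. Unset Printing Implicit Defensive.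

(* Edit distances are natural numbers, and every candidate has one (cores
   exist, and a bijective renaming can match the answer tuples), so among the
   candidates satisfying a property one of least distance exists; it is
   minimal.  All minimal candidates then share the same distance d.  A CQ at
   distance at most d from q has a core with at most |q| + d atoms, so it is
   equivalent to a CQ whose variables are among the first k + (|q| + d) A
   naturals (k the arity, A the sum of the arities of the allowed relation
   symbols); there are finitely many such CQs. *)

Lemma ex_minimal_nat (Q : nat -> Prop) :
  (exists n, Q n) -> exists n, Q n /\ forall m, Q m -> n <= m.
Proof.
move=> [n Qn]; apply: NNPP => nomin; move: Qn; elim/ltn_ind: n => n IH Qn.
apply: nomin; exists n; split=> // m Qm; rewrite leqNgt; apply/negP => mn.
exact: IH m mn Qm.
Qed.

Lemma edit_dist_le_mono q1 q2 n m :
  edit_dist_le q1 q2 n -> n <= m -> edit_dist_le q1 q2 m.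
Proof.
move=> [C1 [C2 [rho [c1 c2 brho hrho sd]]]] nm.
by exists C1, C2, rho; split=> //; apply: leq_trans sd nm.
Qed.

Lemma map_fact_comp g h f : map_fact (g \o h) f = map_fact g (map_fact h f).
Proof. by rewrite /map_fact /= map_comp. Qed.

Lemma hom_ex_trans I a J b K c : hom_ex I a J b -> hom_ex J b K c -> hom_ex I a K c.
Proof.
move=> [h [ha hI]] [g [gb gJ]]; exists (g \o h); split; first by rewrite map_comp ha.
by move=> f /hI /gJ; rewrite map_fact_comp.
Qed.

Lemma hom_ex_sub I J a : {subset J <= I} -> hom_ex J a I a.
Proof. by move=> JI; exists id; split=> [|[s t] /JI]; rewrite ?map_id /map_fact /= ?map_id. Qed.

(* [answer q I a] is literally [hom_ex (body q) (head q) I a]. *)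
Lemma contained_of_hom ar q1 q2 :
  hom_ex (body q2) (head q2) (body q1) (head q1) -> contained ar q1 q2.
Proof. by move=> h12 ex [dex ans]; split=> //; apply: hom_ex_trans h12 ans. Qed.

Lemma equivalent_of_homs ar q1 q2 :
  hom_ex (body q1) (head q1) (body q2) (head q2) ->
  hom_ex (body q2) (head q2) (body q1) (head q1) -> equivalent ar q1 q2.
Proof. by move=> h12 h21; split; apply: contained_of_hom. Qed.

Lemma equivalent_trans ar q1 q2 q3 :
  equivalent ar q1 q2 -> equivalent ar q2 q3 -> equivalent ar q1 q3.
Proof. by move=> [c12 c21] [c23 c32]; split=> ex; [move/c12/c23 | move/c32/c21]. Qed.

Lemma equivalent_retract ar q C :
  {subset C <= body q} -> hom_ex (body q) (head q) C (head q) ->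
  equivalent ar q (head q, C).
Proof. by move=> Cq hC; apply: equivalent_of_homs => //; apply: hom_ex_sub. Qed.

Lemma equivalent_eq_mem ar a C D : C =i D -> equivalent ar (a, C) (a, D).
Proof. by move=> CD; apply: equivalent_of_homs; apply: hom_ex_sub => f; rewrite CD. Qed.

Lemma equivalent_rename ar a C (sg g : nat -> nat) :
  {in a ++ flatten (map snd C), cancel sg g} ->
  equivalent ar (a, C) (map sg a, map (map_fact sg) C).
Proof.
move=> sgK; apply: equivalent_of_homs.
  by exists sg; split=> // f fC; apply: map_f.
exists g; split.
  rewrite -map_comp -[RHS]map_id; apply/eq_in_map => x xa.
  by apply: sgK; rewrite mem_cat xa.
move=> _ /mapP [f fC ->]; rewrite -map_fact_comp.
suff -> : map_fact (g \o sg) f = f by [].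
case: f fC => s t fC; rewrite /map_fact /=; congr (_, _).
rewrite -[RHS]map_id; apply/eq_in_map => x xt; apply: sgK.
rewrite mem_cat; apply/orP; right.
by apply/flattenP; exists t => //; apply: (map_f snd fC).
Qed.

Lemma size_undup_proper (A B : instance) f :
  {subset A <= B} -> f \in B -> f \notin A -> size (undup A) < size (undup B).
Proof.
move=> AB fB fA.
have uf : uniq (f :: undup A) by rewrite /= mem_undup fA undup_uniq.
apply: uniq_leq_size uf _ => x; rewrite inE !mem_undup => /predU1P [-> //|].
exact: AB.
Qed.

Lemma core_exists I a : exists J, is_core I a J.
Proof.
have [_ [[J [JI hJ ->]] Jmin]] :=
  @ex_minimal_nat (fun n => exists J, [/\ sub_inst J I, hom_ex I a J a & n = size (undup J)])
    (ex_intro _ _ (ex_intro _ I (And3 (fun _ => id) (hom_ex_sub a (fun _ => id)) erefl))).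
exists J; split=> // J' [J'J [f fJ fJ']] hJ'.
have : size (undup J) <= size (undup J').
  apply: Jmin; exists J'; split=> //; last exact: hom_ex_trans hJ hJ'.
  by move=> x /J'J /JI.
by rewrite leqNgt (size_undup_proper J'J fJ fJ').
Qed.

Definition swap (z y w : nat) := if w == z then y else if w == y then z else w.

Lemma swapK z y : involutive (swap z y).
Proof.
move=> w; rewrite /swap.
have [->|wz] := eqVneq w z; first by rewrite eqxx; case: eqVneq => [->|]; rewrite ?eqxx.
have [->|wy] := eqVneq w y; first by rewrite eqxx.
by rewrite (negbTE wz) (negbTE wy).
Qed.

Lemma exists_bijective_renaming (a b : seq nat) :
  uniq a -> uniq b -> size a = size b -> exists2 rho, bijective rho & map rho a = b.
Proof.
elim: a b => [|x a IH] [|y b] //=; first by exists id => //; exists id.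
move=> /andP [xa ua] /andP [yb ub] [sz].
have [rho brho rhoa] := IH b ua ub sz.
have rx_b : rho x \notin b by rewrite -rhoa (mem_map (bij_inj brho)).
exists (swap (rho x) y \o rho); first exact: bij_comp (inv_bij (swapK _ _)) brho.
rewrite /= /swap eqxx map_comp rhoa; congr (_ :: _).
rewrite -[RHS]map_id; apply/eq_in_map => w wb /=.
rewrite ifN; last by apply: contraNneq rx_b => <-.
by rewrite ifN //; apply: contraNneq yb => <-.
Qed.

Lemma candidate_has_dist ar q E q' :
  wf_CQ ar q -> candidate ar q E q' -> exists n, edit_dist_le q q' n.
Proof.
move=> [uq _ _] [[uq' _ _] sz _].
have [C1 c1] := core_exists (body q) (head q).
have [C2 c2] := core_exists (body q') (head q').
have [rho brho rhoq] := exists_bijective_renaming uq' uq sz.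
by exists (symdiff_size C1 (map (map_fact rho) C2)), C1, C2, rho.
Qed.

Lemma size_undup_count (B u : instance) :
  uniq u -> {subset B <= u} -> size (undup B) = count (mem B) u.
Proof.
move=> uu Bu; rewrite -size_filter; apply/perm_size/uniq_perm.
- exact: undup_uniq.
- exact: filter_uniq.
move=> x; rewrite mem_undup mem_filter /=.
by case xB: (x \in B); rewrite ?(Bu _ xB).
Qed.

Lemma size_undup_le_symdiff (A B : instance) :
  size (undup B) <= size (undup A) + symdiff_size A B.
Proof.
set u := undup (A ++ B).
have uu : uniq u := undup_uniq _.
rewrite (@size_undup_count B u) //; last first.
  by move=> x xB; rewrite mem_undup mem_cat xB orbT.
rewrite (@size_undup_count A u) //; last first.
  by move=> x xA; rewrite mem_undup mem_cat xA.
rewrite /symdiff_size size_filter -/u -count_predUI; apply: leq_trans (leq_addr _ _).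
by apply: sub_count => x /=; case: (x \in A); case: (x \in B).
Qed.

(* The core of [q'] is matched up to a renaming with the core of [q], which
   has at most [size (body q)] facts; the rest is in the symmetric difference. *)
Lemma small_retract_of_dist q q' d :
  edit_dist_le q q' d ->
  exists C, [/\ {subset C <= body q'}, hom_ex (body q') (head q') C (head q')
              & size C <= size (body q) + d].
Proof.
move=> [C1 [C2 [rho [[C1q _ _] [C2q' hC2 _] brho _ sd]]]].
exists (undup C2); split.
- by move=> f; rewrite mem_undup => /C2q'.
- by apply: hom_ex_trans hC2 (hom_ex_sub _ _) => f; rewrite mem_undup.
have rho_inj : injective (map_fact rho).
  by move=> [s1 t1] [s2 t2] [-> /(inj_map (bij_inj brho)) ->].
rewrite -(size_map (map_fact rho)) -undup_map_inj //.
apply: leq_trans (size_undup_le_symdiff C1 _) _; apply: leq_add => //.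
by apply: uniq_leq_size (undup_uniq _) _ => f; rewrite mem_undup => /C1q.
Qed.

Fixpoint tuples (n M : nat) : seq (seq nat) :=
  if n is n'.+1 then [seq x :: t | x <- iota 0 M, t <- tuples n' M] else [:: [::]].

Lemma mem_tuples M t : all (fun x => x < M) t -> t \in tuples (size t) M.
Proof.
elim: t => [|x t IH] //= /andP [xM tM].
by apply: (allpairs_f (fun x t => x :: t)); rewrite ?mem_iota ?IH.
Qed.

Fixpoint subseqs (s : seq fact) : seq instance :=
  if s is x :: s' then subseqs s' ++ map (cons x) (subseqs s') else [:: [::]].

Lemma mem_subseqs_filter p s : filter p s \in subseqs s.
Proof.
elim: s => [|x s IH] //=; rewrite mem_cat.
by case: (p x); rewrite ?IH // map_f ?orbT.
Qed.

Definition facts_over (ar : nat -> nat) (R : seq nat) (M : nat) : seq fact :=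
  [seq (s, t) | s <- R, t <- tuples (ar s) M].

Lemma mem_facts_over ar R M (f : fact) :
  f.1 \in R -> size f.2 = ar f.1 -> all (fun x => x < M) f.2 -> f \in facts_over ar R M.
Proof.
case: f => s t /= sR tar tM.
by apply/allpairsPdep; exists s, t; split=> //; rewrite -tar; apply: mem_tuples.
Qed.

Lemma arity_le_sum (ar : nat -> nat) R s : s \in R -> ar s <= sumn (map ar R).
Proof.
elim: R => [|x R IH] //=; rewrite inE => /predU1P [->|/IH]; first exact: leq_addr.
by move/leq_trans; apply; apply: leq_addl.
Qed.

Lemma size_flatten_le (ss : seq (seq nat)) A :
  {in ss, forall s, size s <= A} -> size (flatten ss) <= size ss * A.
Proof.
elim: ss => [|s ss IH] //= ssA; rewrite size_cat mulSn.
apply: leq_add; first by apply: ssA; rewrite inE eqxx.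
by apply: IH => t ts; apply: ssA; rewrite inE ts orbT.
Qed.

(* Renaming the variables of [(head q', C)] to their positions in a
   duplicate-free list of them bounds all variables by [M]. *)
Lemma small_retracts_finite ar (R : seq nat) (k N : nat) :
  exists L : seq CQ, forall q' (C : instance),
    wf_CQ ar q' -> size (head q') = k -> {subset rels_of_CQ q' <= R} ->
    {subset C <= body q'} -> hom_ex (body q') (head q') C (head q') -> size C <= N ->
    exists2 r, r \in L & equivalent ar q' r.
Proof.
set A := sumn (map ar R); set M := k + N * A.
exists [seq (h, b) | h <- tuples k M, b <- subseqs (facts_over ar R M)].
move=> q' C [_ _ arq'] kq' Rq' Cq' hC CN.
have arC f : f \in C -> size f.2 = ar f.1 /\ f.1 \in R.
  by move=> /Cq' fq'; split; [apply: arq' | apply/Rq'/map_f].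
set V := undup (head q' ++ flatten (map snd C)).
set sg := index^~ V.
have sgK : {in head q' ++ flatten (map snd C), cancel sg (nth 0 V)}.
  by move=> x xV; rewrite /sg nth_index ?mem_undup.
have sgM x : x \in head q' ++ flatten (map snd C) -> sg x < M.
  move=> xV; have : sg x < size V by rewrite index_mem mem_undup.
  move/leq_trans; apply; apply: leq_trans (size_undup _) _.
  rewrite size_cat kq' leq_add2l; apply: leq_trans (size_flatten_le (A := A) _) _.
    by move=> _ /mapP [f /arC [arf fR] ->]; rewrite arf; apply: arity_le_sum.
  by rewrite size_map leq_mul2r CN orbT.
set B := map (map_fact sg) C.
have B_small : {subset B <= facts_over ar R M}.
  move=> _ /mapP [f fC ->]; have [arf fR] := arC f fC.
  apply: mem_facts_over; rewrite /= ?size_map //; apply/allP => _ /mapP [x xf ->].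
  apply: sgM; rewrite mem_cat; apply/orP; right.
  by apply/flattenP; exists f.2 => //; apply: map_f.
exists (map sg (head q'), filter (mem B) (facts_over ar R M)).
  apply: (allpairs_f (fun h b => (h, b))); last exact: mem_subseqs_filter.
  rewrite -kq' -(size_map sg); apply: mem_tuples; apply/allP => _ /mapP [x xh ->].
  by apply: sgM; rewrite mem_cat xh.
apply: equivalent_trans (equivalent_retract ar Cq' hC) _.
apply: equivalent_trans (equivalent_rename ar sgK) _.
by apply: equivalent_eq_mem => f; rewrite mem_filter andb_idr // => /B_small.
Qed.

Lemma bounded_dist_finite ar q E d :
  exists L : seq CQ, forall q', candidate ar q E q' -> edit_dist_le q q' d ->
    exists2 r, r \in L & equivalent ar q' r.
Proof.
have [L HL] := small_retracts_finite ar (rels_of_CQ q ++ rels_of_annot E)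
  (size (head q)) (size (body q) + d).
exists L => q' [wq' kq' Rq'] /small_retract_of_dist [C [Cq' hC CN]].
exact: HL wq' kq' Rq' Cq' hC CN.
Qed.

Definition dist_minimal (q : CQ) (P : CQ -> Prop) (q' : CQ) : Prop :=
  P q' /\ ~ exists q'', P q'' /\ dist_prec q q'' q'.

Section DistMinimal.

Variables (ar : nat -> nat) (q : CQ) (E : annotation) (P : CQ -> Prop).
Hypothesis wf_q : wf_CQ ar q.
Hypothesis P_candidate : forall r, P r -> candidate ar q E r.

Lemma dist_minimal_exists : (exists r, P r) -> exists r, dist_minimal q P r.
Proof.
move=> [r0 Pr0]; have [n0 d0] := candidate_has_dist wf_q (P_candidate Pr0).
have [n [[r [Pr dr]] nmin]] := @ex_minimal_nat
  (fun n => exists r, P r /\ edit_dist_le q r n) (ex_intro _ n0 (ex_intro _ r0 (conj Pr0 d0))).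
exists r; split=> // -[r' [Pr' [_ not_r_le_r']]]; apply: not_r_le_r' => m dm.
by apply: edit_dist_le_mono dr _; apply: nmin; exists r'.
Qed.

(* A minimal [q'] is within the distance [n0] of any other minimal [q0]:
   otherwise [q0] would be strictly closer to [q]. *)
Lemma dist_minimal_finite : finitely_many_upto_equiv ar (dist_minimal q P).
Proof.
have [[q0 [Pq0 q0min]] | none] := classic (exists q0, dist_minimal q P q0); last first.
  by exists [::] => q' mq'; case: none; exists q'.
have [n0 d0] := candidate_has_dist wf_q (P_candidate Pq0).
have [L HL] := bounded_dist_finite ar q E n0.
exists L => q' [Pq' q'min]; apply: HL; first exact: P_candidate.
apply: NNPP => far; apply: q'min; exists q0; split=> //; split.
  move=> m dm; have [n0m | mn0] := leqP n0 m; first exact: edit_dist_le_mono d0 n0m.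
  by case: far; apply: edit_dist_le_mono dm (ltnW mn0).
by move=> q'_le_q0; apply/far/q'_le_q0.
Qed.

End DistMinimal.

Lemma is_repair_minimal ar q E q' :
  is_repair ar q E q' <-> dist_minimal q (fun r => candidate ar q E r /\ fits ar r E) q'.
Proof.
split=> [[c f nb] | [[c f] nb]]; split=> //.
- by move=> [r [[cr fr] pr]]; apply: nb; exists r.
- by move=> [r [cr fr pr]]; apply: nb; exists r.
Qed.

Lemma is_generalization_minimal ar q E q' :
  is_generalization ar q E q' <->
  dist_minimal q (fun r => [/\ candidate ar q E r, fits ar r E & contained ar q r]) q'.
Proof.
split=> [[c f k nb] | [[c f k] nb]]; split=> //.
- by move=> [r [[cr fr kr] pr]]; apply: nb; exists r.
- by move=> [r [cr fr kr pr]]; apply: nb; exists r.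
Qed.

Lemma is_specialization_minimal ar q E q' :
  is_specialization ar q E q' <->
  dist_minimal q (fun r => [/\ candidate ar q E r, fits ar r E & contained ar r q]) q'.
Proof.
split=> [[c f k nb] | [[c f k] nb]]; split=> //.
- by move=> [r [[cr fr kr] pr]]; apply: nb; exists r.
- by move=> [r [cr fr kr pr]]; apply: nb; exists r.
Qed.

Lemma finitely_many_upto_equiv_sub ar (P Q : CQ -> Prop) :
  (forall r, P r -> Q r) -> finitely_many_upto_equiv ar Q -> finitely_many_upto_equiv ar P.
Proof. by move=> PQ [L HL]; exists L => r /PQ /HL. Qed.

Theorem theorem35 (ar : nat -> nat) (q : CQ) (E : annotation) :
  wf_CQ ar q -> wf_annotation ar q E ->
  [/\ (exists q', candidate ar q E q' /\ fits ar q' E) ->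
        exists q', is_repair ar q E q',
      (exists q', [/\ candidate ar q E q', fits ar q' E & contained ar q q']) ->
        exists q', is_generalization ar q E q',
      (exists q', [/\ candidate ar q E q', fits ar q' E & contained ar q' q]) ->
        exists q', is_specialization ar q E q'
    & [/\ finitely_many_upto_equiv ar (is_repair ar q E),
          finitely_many_upto_equiv ar (is_generalization ar q E)
        & finitely_many_upto_equiv ar (is_specialization ar q E)]].
Proof.
move=> wq _.
have C1 r : candidate ar q E r /\ fits ar r E -> candidate ar q E r by case.
have C2 r : [/\ candidate ar q E r, fits ar r E & contained ar q r] -> candidate ar q E r.
  by case.
have C3 r : [/\ candidate ar q E r, fits ar r E & contained ar r q] -> candidate ar q E r.
  by case.
split.
- by move/(dist_minimal_exists wq C1) => [r /is_repair_minimal]; exists r.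
- by move/(dist_minimal_exists wq C2) => [r /is_generalization_minimal]; exists r.
- by move/(dist_minimal_exists wq C3) => [r /is_specialization_minimal]; exists r.
split.
- apply: finitely_many_upto_equiv_sub (dist_minimal_finite wq C1).
  by move=> r /is_repair_minimal.
- apply: finitely_many_upto_equiv_sub (dist_minimal_finite wq C2).
  by move=> r /is_generalization_minimal.
- apply: finitely_many_upto_equiv_sub (dist_minimal_finite wq C3).
  by move=> r /is_specialization_minimal.
Qed.
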